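(* The transitivity degree of Thompson's group $F$ is at most $2$.
   Context: Thompson's group $F$ is the group of orientation-preserving homeomorphisms of $[0,1]$ that are piecewise linear with finitely many points of non-differentiability, all at dyadic rationals, and whose slopes are integer powers of $2$. The transitivity degree of a group is the supremum of all $k$ such that it admits a faithful action on a set that is transitive on ordered $k$-tuples of distinct elements. *)

From Stdlib Require Import Reals ZArith Arith.
Open Scope R_scope.

Definition dyadic (x : R) : Prop :=
  exists (z : Z) (n : nat), x = IZR z / 2 ^ n.

(* Elements of Thompson's group F, represented as functions R -> R that are
   the identity outside [0,1] (so that equality of group elements is plain
   function equality). *)
Definition thompsonF (f : R -> R) : Prop :=
  (forall x, (x < 0 \/ 1 < x) -> f x = x) /\
  f 0 = 0 /\ f 1 = 1 /\
  (forall x y, 0 <= x -> x < y -> y <= 1 -> f x < f y) /\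
  exists (n : nat) (a : nat -> R),
    (0 < n)%nat /\ a 0%nat = 0 /\ a n = 1 /\
    (forall i, (i <= n)%nat -> dyadic (a i)) /\
    (forall i, (i < n)%nat -> a i < a (S i)) /\
    (forall i, (i < n)%nat -> exists (e : Z) (c : R),
        forall x, a i <= x <= a (S i) -> f x = powerRZ 2 e * x + c).

(* A (left) action of F on a type X, given by act : (R -> R) -> X -> X
   (only its values on elements of F matter); group law = composition. *)
Definition F_action (X : Type) (act : (R -> R) -> X -> X) : Prop :=
  (forall x, act (fun t => t) x = x) /\
  (forall f g, thompsonF f -> thompsonF g ->
     forall x, act (fun t => f (g t)) x = act f (act g x)).

Definition F_faithful (X : Type) (act : (R -> R) -> X -> X) : Prop :=
  forall f, thompsonF f -> (forall x, act f x = x) -> f = (fun t => t).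

Definition distinct_tuple (X : Type) (k : nat) (u : nat -> X) : Prop :=
  forall i j, (i < k)%nat -> (j < k)%nat -> u i = u j -> i = j.

Definition F_k_transitive (X : Type) (act : (R -> R) -> X -> X) (k : nat) : Prop :=
  (exists u : nat -> X, distinct_tuple X k u) /\
  forall u v : nat -> X, distinct_tuple X k u -> distinct_tuple X k v ->
    exists f, thompsonF f /\ forall i, (i < k)%nat -> act f (u i) = v i.

(* Suppose F acts faithfully and 3-transitively on X, and let L be the subgroup of elements
   supported in [0,1/2].  For x in F, one of x and x^-1 maps 1/2 into [0,1/2], and conjugating
   an element of L by it gives again an element of L.

   L acts freely.  Otherwise some w <> 1 in L fixes a point.  Take c <> 1 supported in [1/2,1]
   and a point m moved by c.  Using 3-transitivity we find x, swapping two of three suitable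
   points, such that both x w x^-1 and x^-1 w x fix c m but move m.  The one of them lying in
   L commutes with c, so fixing c m it fixes m: contradiction.

   L does not act freely.  Take k <> 1 in L with all powers nontrivial, a point p, and x fixing
   p and k p but sending k^2 p to k^-1 p.  If g in {x, x^-1} maps 1/2 into [0,1/2], then
   k^-1 (g k g^-1) lies in L and fixes p, hence is trivial; so g commutes with k and fixes
   the whole k-orbit of p, whereas both x and x^-1 move a point of that orbit. *)

From Stdlib Require Import Reals ZArith Arith Lra Lia.
From Stdlib Require Import Classical ClassicalEpsilon FunctionalExtensionality.
Open Scope R_scope.

(** * Dyadic grids and piecewise affine maps *)

Lemma pow2_gt0 (N : nat) : 0 < 2 ^ N.
Proof. apply pow_lt; lra. Qed.

Lemma pow2_nat_gt0 (N : nat) : (0 < 2 ^ N)%nat.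
Proof. apply Nat.neq_0_lt_0, Nat.pow_nonzero; lia. Qed.

Definition on_level (N : nat) (x : R) : Prop := exists z : Z, x = IZR z / 2 ^ N.

Lemma on_level_mono (N M : nat) (x : R) : (N <= M)%nat -> on_level N x -> on_level M x.
Proof.
  intros HNM [z ->]. exists (z * 2 ^ Z.of_nat (M - N))%Z.
  rewrite mult_IZR, <- pow_IZR. rewrite <- (Nat.sub_add N M HNM) at 2.
  rewrite pow_add. simpl IZR. field. split; apply pow_nonzero; lra.
Qed.

Lemma dyadic_common_level (n : nat) (a : nat -> R) :
  (forall i, (i <= n)%nat -> dyadic (a i)) ->
  exists M, forall i, (i <= n)%nat -> on_level M (a i).
Proof.
  induction n as [|n IH]; intros Ha.
  - destruct (Ha 0%nat (le_n 0)) as [z [N HN]]. exists N.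
    intros i Hi. replace i with 0%nat by lia. exists z. exact HN.
  - destruct IH as [M HM]; [intros i Hi; apply Ha; lia|].
    destruct (Ha (S n) (le_n _)) as [z [N HN]].
    exists (Nat.max M N). intros i Hi.
    destruct (Nat.eq_dec i (S n)) as [->|Hne].
    + apply (on_level_mono N); [lia|]. exists z. exact HN.
    + apply (on_level_mono M); [lia|]. apply HM. lia.
Qed.

Lemma dyadic_plus (x y : R) : dyadic x -> dyadic y -> dyadic (x + y).
Proof.
  intros [z1 [n1 Hx]] [z2 [n2 Hy]].
  destruct (on_level_mono n1 (n1 + n2) x ltac:(lia) (ex_intro _ z1 Hx)) as [w1 ->].
  destruct (on_level_mono n2 (n1 + n2) y ltac:(lia) (ex_intro _ z2 Hy)) as [w2 ->].
  exists (w1 + w2)%Z, (n1 + n2)%nat. rewrite plus_IZR. field. apply pow_nonzero; lra.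
Qed.

Lemma dyadic_mult (x y : R) : dyadic x -> dyadic y -> dyadic (x * y).
Proof.
  intros [z1 [n1 ->]] [z2 [n2 ->]]. exists (z1 * z2)%Z, (n1 + n2)%nat.
  rewrite mult_IZR, pow_add. field. split; apply pow_nonzero; lra.
Qed.

Lemma dyadic_powerRZ2 (e : Z) : dyadic (powerRZ 2 e).
Proof.
  destruct e as [|p|p]; simpl.
  - exists 1%Z, 0%nat. simpl. lra.
  - exists (2 ^ Z.of_nat (Pos.to_nat p))%Z, 0%nat. rewrite <- pow_IZR. simpl. field.
  - exists 1%Z, (Pos.to_nat p). simpl. field. apply pow_nonzero; lra.
Qed.

Definition grid_point (N j : nat) : R := INR j / 2 ^ N.

Lemma grid_point_on_level (N j : nat) : on_level N (grid_point N j).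
Proof. exists (Z.of_nat j). unfold grid_point. now rewrite INR_IZR_INZ. Qed.

Lemma grid_point_0 (N : nat) : grid_point N 0 = 0.
Proof. unfold grid_point. simpl. field. apply pow_nonzero; lra. Qed.

Lemma grid_point_top (N : nat) : grid_point N (2 ^ N) = 1.
Proof.
  unfold grid_point. rewrite pow_INR. replace (INR 2) with 2 by (simpl; lra).
  field. apply pow_nonzero; lra.
Qed.

Lemma grid_point_S (N j : nat) : grid_point N (S j) = grid_point N j + / 2 ^ N.
Proof. unfold grid_point. rewrite S_INR. field. apply pow_nonzero; lra. Qed.

Lemma grid_point_lt (N i j : nat) : (i < j)%nat -> grid_point N i < grid_point N j.
Proof.
  intros Hij. unfold grid_point, Rdiv. apply Rmult_lt_compat_r.
  - apply Rinv_0_lt_compat, pow2_gt0.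
  - now apply lt_INR.
Qed.

Lemma grid_point_le (N i j : nat) : (i <= j)%nat -> grid_point N i <= grid_point N j.
Proof.
  intros Hij. destruct (Nat.eq_dec i j) as [->|Hne]; [lra|].
  left. apply grid_point_lt. lia.
Qed.

Lemma grid_point_refine (N M j : nat) :
  (N <= M)%nat -> grid_point N j = grid_point M (j * 2 ^ (M - N)).
Proof.
  intros HNM. unfold grid_point. rewrite mult_INR, pow_INR.
  replace (INR 2) with 2 by (simpl; lra).
  rewrite <- (Nat.sub_add N M HNM) at 2. rewrite pow_add.
  field. split; apply pow_nonzero; lra.
Qed.

Lemma grid_cell_no_interior (M j : nat) (z : R) :
  on_level M z -> ~ (grid_point M j < z < grid_point M (S j)).
Proof.
  intros [w ->] [Hl Hr]. unfold grid_point in *.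
  assert (P := pow2_gt0 M).
  apply Rmult_lt_reg_r in Hl, Hr; [|apply Rinv_0_lt_compat; exact P ..].
  rewrite INR_IZR_INZ in Hl, Hr. apply lt_IZR in Hl, Hr. lia.
Qed.

Definition pow2_affine_on (l r : R) (f : R -> R) : Prop :=
  exists (e : Z) (c : R), forall x, l <= x <= r -> f x = powerRZ 2 e * x + c.

Definition grid_affine (N : nat) (f : R -> R) : Prop :=
  forall j, (j < 2 ^ N)%nat -> pow2_affine_on (grid_point N j) (grid_point N (S j)) f.

Lemma pow2_affine_on_sub (l r l' r' : R) (f : R -> R) :
  l <= l' -> r' <= r -> pow2_affine_on l r f -> pow2_affine_on l' r' f.
Proof. intros Hl Hr [e [c Hf]]. exists e, c. intros x Hx. apply Hf. lra. Qed.

Lemma pow2_affine_on_comp (l r l' r' : R) (f g : R -> R) :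
  (forall x, l <= x <= r -> l' <= g x <= r') ->
  pow2_affine_on l' r' f -> pow2_affine_on l r g -> pow2_affine_on l r (fun x => f (g x)).
Proof.
  intros Hg [e' [c' Hf]] [e [c He]]. exists (e' + e)%Z, (powerRZ 2 e' * c + c').
  intros x Hx. rewrite Hf, He by auto. rewrite powerRZ_add by lra. ring.
Qed.

Lemma interval_search (n : nat) (a : nat -> R) (t : R) :
  a 0%nat <= t -> t < a n -> exists i, (i < n)%nat /\ a i <= t < a (S i).
Proof.
  induction n as [|n IH]; intros H0 Hn; [lra|].
  destruct (Rlt_dec t (a n)) as [Hlt|Hge].
  - destruct (IH H0 Hlt) as [i [Hi Ht]]. exists i. split; [lia|exact Ht].
  - exists n. split; [lia|lra].
Qed.

Lemma interval_containing (n : nat) (a : nat -> R) (l r : R) :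
  a 0%nat <= l -> l < a n -> (forall i, (i <= n)%nat -> ~ (l < a i < r)) ->
  exists i, (i < n)%nat /\ a i <= l /\ r <= a (S i).
Proof.
  intros H0 Hn Hgap. destruct (interval_search n a l H0 Hn) as [i [Hi Hl]].
  exists i. repeat split; [lia|lra|].
  destruct (Rle_dec r (a (S i))) as [Hr|Hr]; [exact Hr|].
  exfalso. apply (Hgap (S i)); [lia|lra].
Qed.

Lemma grid_affine_of_partition (f : R -> R) (n M : nat) (a : nat -> R) :
  a 0%nat = 0 -> a n = 1 -> (forall i, (i <= n)%nat -> on_level M (a i)) ->
  (forall i, (i < n)%nat -> pow2_affine_on (a i) (a (S i)) f) -> grid_affine M f.
Proof.
  intros H0 Hn Hlev Hf j Hj.
  destruct (interval_containing n a (grid_point M j) (grid_point M (S j)))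
    as [i [Hi [Hl Hr]]].
  - rewrite H0, <- (grid_point_0 M). apply grid_point_le. lia.
  - rewrite Hn, <- (grid_point_top M). apply grid_point_lt. exact Hj.
  - intros i Hi. apply grid_cell_no_interior, Hlev, Hi.
  - exact (pow2_affine_on_sub _ _ _ _ f Hl Hr (Hf i Hi)).
Qed.

Lemma grid_affine_mono (N M : nat) (f : R -> R) :
  (N <= M)%nat -> grid_affine N f -> grid_affine M f.
Proof.
  intros HNM Hf. apply (grid_affine_of_partition f (2 ^ N) M (grid_point N)).
  - apply grid_point_0.
  - apply grid_point_top.
  - intros i _. apply (on_level_mono N M _ HNM), grid_point_on_level.
  - exact Hf.
Qed.

Lemma thompsonF_grid_affine (f : R -> R) : thompsonF f -> exists N, grid_affine N f.
Proof.
  intros (_ & _ & _ & _ & n & a & _ & Ha0 & Han & Hdy & _ & Hpieces).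
  destruct (dyadic_common_level n a Hdy) as [M HM]. exists M.
  exact (grid_affine_of_partition f n M a Ha0 Han HM Hpieces).
Qed.

Lemma thompsonF_of_grid_affine (f : R -> R) (N : nat) :
  (forall x, (x < 0 \/ 1 < x) -> f x = x) -> f 0 = 0 -> f 1 = 1 ->
  (forall x y, 0 <= x -> x < y -> y <= 1 -> f x < f y) -> grid_affine N f ->
  thompsonF f.
Proof.
  intros Hout H0 H1 Hinc Hgrid. repeat split; auto.
  exists (2 ^ N)%nat, (grid_point N). repeat split.
  - apply pow2_nat_gt0.
  - apply grid_point_0.
  - apply grid_point_top.
  - intros i _. destruct (grid_point_on_level N i) as [z Hz]. exists z, N. exact Hz.
  - intros i _. apply grid_point_lt. lia.
  - exact Hgrid.
Qed.

Lemma thompsonF_id : thompsonF (fun t => t).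
Proof.
  apply (thompsonF_of_grid_affine _ 0); auto.
  intros j _. exists 0%Z, 0. intros x _. simpl. ring.
Qed.

Lemma grid_affine_point_dyadic (f : R -> R) (N j : nat) :
  f 0 = 0 -> grid_affine N f -> (j <= 2 ^ N)%nat -> dyadic (f (grid_point N j)).
Proof.
  intros H0 Hgrid. induction j as [|j IH]; intros Hj.
  - rewrite grid_point_0, H0. exists 0%Z, 0%nat. simpl. lra.
  - destruct (Hgrid j Hj) as [e [c Hf]].
    assert (Hlt := grid_point_lt N j (S j) (Nat.lt_succ_diag_r j)).
    replace (f (grid_point N (S j))) with (f (grid_point N j) + powerRZ 2 e * / 2 ^ N).
    + apply dyadic_plus; [apply IH; lia|]. apply dyadic_mult; [apply dyadic_powerRZ2|].
      exists 1%Z, N. simpl. lra.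
    + rewrite !Hf, grid_point_S by lra. ring.
Qed.

(** * F is a group *)

Lemma thompsonF_lt (f : R -> R) (x y : R) : thompsonF f -> x < y -> f x < f y.
Proof.
  intros (Hout & H0 & H1 & Hinc & _) Hxy.
  assert (Hunit : forall z, 0 <= z <= 1 -> 0 <= f z <= 1).
  { intros z Hz. split.
    - destruct (Req_dec z 0) as [->|]; [lra|]. rewrite <- H0. left. apply Hinc; lra.
    - destruct (Req_dec z 1) as [->|]; [lra|]. rewrite <- H1. left. apply Hinc; lra. }
  destruct (Rlt_dec x 0), (Rlt_dec 1 y), (Rlt_dec y 0), (Rlt_dec 1 x);
    try (rewrite (Hout x) by lra); try (rewrite (Hout y) by lra);
    try lra; try (apply Hinc; lra).
  - specialize (Hunit y). lra.
  - specialize (Hunit x). lra.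
Qed.

Lemma thompsonF_lt_iff (f : R -> R) (x y : R) : thompsonF f -> f x < f y <-> x < y.
Proof.
  intros Hf. split; [|apply thompsonF_lt, Hf].
  intros Hfxy. destruct (Rlt_dec x y) as [|Hyx]; [assumption|].
  destruct (Req_dec x y) as [->|]; [lra|].
  assert (f y < f x) by (apply thompsonF_lt; [exact Hf|lra]). lra.
Qed.

Lemma thompsonF_le_iff (f : R -> R) (x y : R) : thompsonF f -> f x <= f y <-> x <= y.
Proof.
  intros Hf. pose proof (thompsonF_lt_iff f y x Hf) as Hlt.
  split; intros Hle; apply Rnot_lt_le; intros Hgt; apply Rle_not_lt in Hle; tauto.
Qed.

Lemma thompsonF_inj (f : R -> R) (x y : R) : thompsonF f -> f x = f y -> x = y.
Proof.
  intros Hf Hxy. apply Rle_antisym; apply (thompsonF_le_iff f _ _ Hf); lra.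
Qed.

Lemma pow2_affine_solve (f : R -> R) (e : Z) (c u v y : R) :
  u <= v -> (forall x, u <= x <= v -> f x = powerRZ 2 e * x + c) -> f u <= y <= f v ->
  let x := powerRZ 2 (- e) * y + - powerRZ 2 (- e) * c in u <= x <= v /\ f x = y.
Proof.
  intros Huv Hf Hy x.
  assert (HP := powerRZ_lt 2 e ltac:(lra)).
  assert (Hx : powerRZ 2 e * x + c = y).
  { unfold x. rewrite powerRZ_neg' by lra. field. lra. }
  rewrite !Hf in Hy by lra.
  assert (Hux : u <= x).
  { apply (Rmult_le_reg_l (powerRZ 2 e)); lra. }
  assert (Hxv : x <= v).
  { apply (Rmult_le_reg_l (powerRZ 2 e)); lra. }
  split; [lra|]. rewrite Hf by lra. exact Hx.
Qed.

Lemma thompsonF_surj (f : R -> R) : thompsonF f -> forall y, exists x, f x = y.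
Proof.
  intros Hf y. pose proof Hf as (Hout & H0 & H1 & _).
  destruct (Rlt_dec y 0) as [Hy|Hy]; [exists y; apply Hout; lra|].
  destruct (Rle_dec 1 y) as [Hy'|Hy'].
  { destruct (Req_dec y 1) as [->|]; [exists 1; exact H1|]. exists y. apply Hout. lra. }
  destruct (thompsonF_grid_affine f Hf) as [N Hgrid].
  destruct (interval_search (2 ^ N) (fun j => f (grid_point N j)) y) as [j [Hj Hy'']];
    simpl; [rewrite grid_point_0; lra|rewrite grid_point_top; lra|].
  destruct (Hgrid j Hj) as [e [c Hpiece]].
  destruct (pow2_affine_solve f e c (grid_point N j) (grid_point N (S j)) y)
    as [_ Hx]; [apply grid_point_le; lia|exact Hpiece|lra|eauto].
Qed.

Definition finv (f : R -> R) (y : R) : R := epsilon (inhabits 0) (fun x => f x = y).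

Lemma finv_r (f : R -> R) (y : R) : thompsonF f -> f (finv f y) = y.
Proof. intros Hf. apply (epsilon_spec (inhabits 0) (fun x => f x = y)), thompsonF_surj, Hf. Qed.

Lemma finv_l (f : R -> R) (x : R) : thompsonF f -> finv f (f x) = x.
Proof. intros Hf. apply (thompsonF_inj f _ _ Hf), finv_r, Hf. Qed.

Lemma thompsonF_finv (f : R -> R) : thompsonF f -> thompsonF (finv f).
Proof.
  intros Hf. pose proof Hf as (Hout & H0 & H1 & _).
  destruct (thompsonF_grid_affine f Hf) as [N Hgrid].
  split; [|split; [|split; [|split]]].
  - intros x Hx. rewrite <- (Hout x Hx) at 1. apply finv_l, Hf.
  - rewrite <- H0 at 1. apply finv_l, Hf.
  - rewrite <- H1 at 1. apply finv_l, Hf.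
  - intros x y _ Hxy _. apply (thompsonF_lt_iff f _ _ Hf). rewrite !finv_r by exact Hf. exact Hxy.
  - exists (2 ^ N)%nat, (fun j => f (grid_point N j)). repeat split.
    + apply pow2_nat_gt0.
    + rewrite grid_point_0. exact H0.
    + rewrite grid_point_top. exact H1.
    + intros i Hi. apply grid_affine_point_dyadic; assumption.
    + intros i _. apply thompsonF_lt; [exact Hf|]. apply grid_point_lt. lia.
    + intros i Hi. destruct (Hgrid i Hi) as [e [c Hpiece]].
      exists (- e)%Z, (- powerRZ 2 (- e) * c). intros y Hy.
      destruct (pow2_affine_solve f e c (grid_point N i) (grid_point N (S i)) y)
        as [_ Hx]; [apply grid_point_le; lia|exact Hpiece|exact Hy|].
      rewrite <- Hx at 1. apply finv_l, Hf.
Qed.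

Lemma thompsonF_le_or_finv_le (x : R -> R) (a : R) : thompsonF x -> x a <= a \/ finv x a <= a.
Proof.
  intros Hx. destruct (Rle_dec (x a) a) as [|Hgt]; [left; assumption|right].
  rewrite <- (finv_l x a Hx) at 2.
  apply thompsonF_le_iff; [apply thompsonF_finv, Hx|lra].
Qed.

Lemma thompsonF_dyadic (f : R -> R) (N j : nat) :
  thompsonF f -> (j <= 2 ^ N)%nat -> dyadic (f (grid_point N j)).
Proof.
  intros Hf Hj. destruct (thompsonF_grid_affine f Hf) as [L Hgrid].
  rewrite (grid_point_refine N (Nat.max L N)) by lia.
  apply grid_affine_point_dyadic.
  - exact (proj1 (proj2 Hf)).
  - apply (grid_affine_mono L); [lia|exact Hgrid].
  - rewrite <- (Nat.sub_add N (Nat.max L N)) at 2 by lia.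
    rewrite Nat.pow_add_r, Nat.mul_comm. apply Nat.mul_le_mono_l. exact Hj.
Qed.

Lemma thompsonF_cell_image (g : R -> R) (N M j : nat) :
  thompsonF g -> (forall i, (i <= 2 ^ N)%nat -> on_level M (finv g (grid_point N i))) ->
  (j < 2 ^ M)%nat ->
  exists i, (i < 2 ^ N)%nat /\
    grid_point N i <= g (grid_point M j) /\ g (grid_point M (S j)) <= grid_point N (S i).
Proof.
  intros Hg Hlev Hj. pose proof Hg as (_ & Hg0 & Hg1 & _).
  apply interval_containing.
  - rewrite grid_point_0, <- Hg0. apply thompsonF_le_iff; [exact Hg|].
    rewrite <- (grid_point_0 M). apply grid_point_le. lia.
  - rewrite grid_point_top, <- Hg1. apply thompsonF_lt; [exact Hg|].
    rewrite <- (grid_point_top M). apply grid_point_lt. exact Hj.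
  - intros i Hi Hin. apply (grid_cell_no_interior M j _ (Hlev i Hi)).
    rewrite <- (finv_r g (grid_point N i) Hg) in Hin.
    split; apply (thompsonF_lt_iff g _ _ Hg), Hin.
Qed.

(* Once the grid of [g] contains the preimages of the grid points of [f], [g] maps each of
   its cells into a cell of [f]. *)
Lemma thompsonF_comp (f g : R -> R) :
  thompsonF f -> thompsonF g -> thompsonF (fun t => f (g t)).
Proof.
  intros Hf Hg.
  pose proof Hf as (Hfout & Hf0 & Hf1 & _). pose proof Hg as (Hgout & Hg0 & Hg1 & _).
  destruct (thompsonF_grid_affine f Hf) as [N1 Hgf].
  destruct (thompsonF_grid_affine g Hg) as [N2 Hgg].
  destruct (dyadic_common_level (2 ^ N1) (fun i => finv g (grid_point N1 i))) as [M0 HM0].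
  { intros i Hi. apply thompsonF_dyadic; [apply thompsonF_finv, Hg|exact Hi]. }
  set (M := Nat.max M0 N2).
  apply (thompsonF_of_grid_affine _ M).
  - intros x Hx. rewrite Hgout by exact Hx. apply Hfout, Hx.
  - rewrite Hg0. exact Hf0.
  - rewrite Hg1. exact Hf1.
  - intros x y _ Hxy _. apply thompsonF_lt; [exact Hf|]. apply thompsonF_lt; assumption.
  - intros j Hj.
    destruct (thompsonF_cell_image g N1 M j Hg) as [i [Hi [Hl Hr]]]; [|exact Hj|].
    { intros i Hi. apply (on_level_mono M0); [lia|]. apply HM0, Hi. }
    apply (pow2_affine_on_comp _ _ (grid_point N1 i) (grid_point N1 (S i))).
    + intros x Hx. split.
      * apply (Rle_trans _ _ _ Hl). apply thompsonF_le_iff; [exact Hg|apply Hx].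
      * apply (Rle_trans _ _ _ ltac:(apply thompsonF_le_iff; [exact Hg|apply Hx]) Hr).
    + apply Hgf, Hi.
    + apply (grid_affine_mono N2); [lia|exact Hgg|exact Hj].
Qed.

(** * Supports and two elements of F *)

Definition fixes_above (a : R) (f : R -> R) : Prop := forall t, a <= t -> f t = t.

Definition fixes_below (a : R) (f : R -> R) : Prop := forall t, t <= a -> f t = t.

Lemma fixes_above_mono (a b : R) (f : R -> R) : a <= b -> fixes_above a f -> fixes_above b f.
Proof. intros Hab Hf t Ht. apply Hf. lra. Qed.

Lemma fixes_above_comp (a : R) (f g : R -> R) :
  fixes_above a f -> fixes_above a g -> fixes_above a (fun t => f (g t)).
Proof. intros Hf Hg t Ht. rewrite Hg by exact Ht. apply Hf, Ht. Qed.

Lemma fixes_above_finv (a : R) (f : R -> R) :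
  thompsonF f -> fixes_above a f -> fixes_above a (finv f).
Proof. intros Hf Hfa t Ht. rewrite <- (Hfa t Ht) at 1. apply finv_l, Hf. Qed.

Lemma fixes_above_iter (a : R) (f : R -> R) (n : nat) :
  fixes_above a f -> fixes_above a (Nat.iter n f).
Proof.
  intros Hf. induction n as [|n IH]; [intros t _; reflexivity|].
  exact (fixes_above_comp a f _ Hf IH).
Qed.

Lemma fixes_above_conj (a : R) (g w : R -> R) :
  thompsonF g -> fixes_above a w -> fixes_above (g a) (fun t => g (w (finv g t))).
Proof.
  intros Hg Hw t Ht. rewrite Hw; [apply finv_r, Hg|].
  rewrite <- (finv_l g a Hg). apply thompsonF_le_iff; [apply thompsonF_finv, Hg|exact Ht].
Qed.

Lemma thompsonF_iter (f : R -> R) (n : nat) : thompsonF f -> thompsonF (Nat.iter n f).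
Proof.
  intros Hf. induction n as [|n IH]; [exact thompsonF_id|].
  exact (thompsonF_comp f _ Hf IH).
Qed.

Lemma disjoint_supports_commute (a : R) (f g : R -> R) :
  thompsonF f -> thompsonF g -> fixes_above a f -> fixes_below a g ->
  forall t, f (g t) = g (f t).
Proof.
  intros Hf Hg Hfa Hgb t. destruct (Rle_dec t a) as [Hta|Hta].
  - rewrite (Hgb t Hta). symmetry. apply Hgb.
    rewrite <- (Hfa a (Rle_refl a)). apply thompsonF_le_iff; assumption.
  - rewrite (Hfa t) by lra. apply Hfa.
    rewrite <- (Hgb a (Rle_refl a)). apply thompsonF_le_iff; [exact Hg|lra].
Qed.

Definition bump_left (t : R) : R :=
  if Rle_dec t 0 then t
  else if Rle_dec t (1/4) then t / 2
  else if Rle_dec t (3/8) then t - 1/8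
  else if Rle_dec t (1/2) then 2 * t - 1/2
  else t.

Definition bump_right (t : R) : R :=
  if Rle_dec t (1/2) then t
  else if Rle_dec t (3/4) then t / 2 + 1/4
  else if Rle_dec t (7/8) then t - 1/8
  else if Rle_dec t 1 then 2 * t - 1
  else t.

Lemma thompsonF_bump_left : thompsonF bump_left.
Proof.
  apply (thompsonF_of_grid_affine _ 3);
    [intros; unfold bump_left; repeat destruct Rle_dec; lra ..|].
  intros j Hj. unfold grid_point.
  destruct j as [|[|[|[|[|[|[|[|j]]]]]]]];
    [exists (-1)%Z, 0 | exists (-1)%Z, 0 | exists 0%Z, (-1/8) | exists 1%Z, (-1/2)
    | exists 0%Z, 0 | exists 0%Z, 0 | exists 0%Z, 0 | exists 0%Z, 0 | simpl in Hj; lia];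
    intros x Hx; simpl in *; unfold bump_left; repeat destruct Rle_dec; lra.
Qed.

Lemma thompsonF_bump_right : thompsonF bump_right.
Proof.
  apply (thompsonF_of_grid_affine _ 3);
    [intros; unfold bump_right; repeat destruct Rle_dec; lra ..|].
  intros j Hj. unfold grid_point.
  destruct j as [|[|[|[|[|[|[|[|j]]]]]]]];
    [exists 0%Z, 0 | exists 0%Z, 0 | exists 0%Z, 0 | exists 0%Z, 0
    | exists (-1)%Z, (1/4) | exists (-1)%Z, (1/4) | exists 0%Z, (-1/8) | exists 1%Z, (-1)
    | simpl in Hj; lia];
    intros x Hx; simpl in *; unfold bump_right; repeat destruct Rle_dec; lra.
Qed.

Lemma bump_left_fixes_above : fixes_above (1/2) bump_left.
Proof. intros t Ht. unfold bump_left. repeat destruct Rle_dec; lra. Qed.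

Lemma bump_right_fixes_below : fixes_below (1/2) bump_right.
Proof. intros t Ht. unfold bump_right. repeat destruct Rle_dec; lra. Qed.

Lemma bump_left_iter_moves (n : nat) : Nat.iter (S n) bump_left (1/4) < 1/4.
Proof.
  assert (Hle : forall t, bump_left t <= t) by (intros t; unfold bump_left; repeat destruct Rle_dec; lra).
  induction n as [|n IH].
  - simpl. unfold bump_left. repeat destruct Rle_dec; lra.
  - simpl in *. specialize (Hle (bump_left (Nat.iter n bump_left (1/4)))). lra.
Qed.

Lemma bump_right_moves : bump_right (3/4) <> 3/4.
Proof. unfold bump_right. repeat destruct Rle_dec; lra. Qed.

Section Action.

Variables (X : Type) (act : (R -> R) -> X -> X).
Hypothesis act_action : F_action X act.

Lemma act_id (p : X) : act (fun t => t) p = p.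
Proof. exact (proj1 act_action p). Qed.

Lemma act_comp (f g : R -> R) (p : X) :
  thompsonF f -> thompsonF g -> act (fun t => f (g t)) p = act f (act g p).
Proof. intros Hf Hg. exact (proj2 act_action f g Hf Hg p). Qed.

Lemma act_ext (f g : R -> R) (p : X) : (forall t, f t = g t) -> act f p = act g p.
Proof. intros Hfg. now rewrite (functional_extensionality f g Hfg). Qed.

Lemma act_finv_l (f : R -> R) (p : X) : thompsonF f -> act (finv f) (act f p) = p.
Proof.
  intros Hf. rewrite <- act_comp by auto using thompsonF_finv.
  rewrite <- (act_id p) at 2. apply act_ext. intros t. apply finv_l, Hf.
Qed.

Lemma act_finv_r (f : R -> R) (p : X) : thompsonF f -> act f (act (finv f) p) = p.
Proof.
  intros Hf. rewrite <- act_comp by auto using thompsonF_finv.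
  rewrite <- (act_id p) at 2. apply act_ext. intros t. apply finv_r, Hf.
Qed.

Lemma act_inj (f : R -> R) (p q : X) : thompsonF f -> act f p = act f q -> p = q.
Proof.
  intros Hf Hpq. rewrite <- (act_finv_l f p Hf), Hpq. apply act_finv_l, Hf.
Qed.

Lemma act_iter (f : R -> R) (n : nat) (p : X) :
  thompsonF f -> act (Nat.iter n f) p = Nat.iter n (act f) p.
Proof.
  intros Hf. induction n as [|n IH]; [apply act_id|].
  simpl. rewrite <- IH. exact (act_comp f (Nat.iter n f) p Hf (thompsonF_iter f n Hf)).
Qed.

Lemma act_conj (g w : R -> R) (p : X) : thompsonF g -> thompsonF w ->
  act (fun t => g (w (finv g t))) p = act g (act w (act (finv g) p)).
Proof.
  intros Hg Hw. pose proof (thompsonF_finv g Hg).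
  rewrite (act_comp g (fun t => w (finv g t))), (act_comp w (finv g));
    auto using thompsonF_comp.
Qed.

Lemma act_commute (f g : R -> R) (p : X) : thompsonF f -> thompsonF g ->
  (forall t, f (g t) = g (f t)) -> act f (act g p) = act g (act f p).
Proof.
  intros Hf Hg Hfg. rewrite <- !act_comp by assumption. apply act_ext, Hfg.
Qed.

End Action.

(** * From k-transitivity to 3-transitivity *)

Section Tuples.

Variables (X : Type) (k : nat).

Definition tuple_place (v : nat -> X) (i : nat) (p : X) (l : nat) : X :=
  if Nat.eq_dec l i then p
  else if excluded_middle_informative (v l = p) then v i else v l.

Lemma distinct_tuple_place (v : nat -> X) (i : nat) (p : X) :
  distinct_tuple X k v -> (i < k)%nat -> distinct_tuple X k (tuple_place v i p).
Proof.
  intros Hv Hi a b Ha Hb. unfold tuple_place.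
  destruct (Nat.eq_dec a i) as [Hai|Hai], (Nat.eq_dec b i) as [Hbi|Hbi];
    repeat destruct excluded_middle_informative; intros Hab; subst;
    first [ reflexivity | exfalso; congruence | apply Hv; auto; congruence
          | exfalso; apply Hai; apply Hv; auto; congruence
          | exfalso; apply Hbi; apply Hv; auto; congruence ].
Qed.

Lemma tuple_place_at (v : nat -> X) (i : nat) (p : X) : tuple_place v i p i = p.
Proof. unfold tuple_place. now destruct Nat.eq_dec. Qed.

Lemma tuple_place_other (v : nat -> X) (i l : nat) (p : X) :
  l <> i -> v l <> p -> tuple_place v i p l = v l.
Proof.
  intros Hli Hvl. unfold tuple_place.
  destruct Nat.eq_dec; [contradiction|]. now destruct excluded_middle_informative.
Qed.

Lemma distinct_tuple_prefix3 (u : nat -> X) (p0 p1 p2 : X) :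
  (3 <= k)%nat -> distinct_tuple X k u -> p0 <> p1 -> p0 <> p2 -> p1 <> p2 ->
  exists t, distinct_tuple X k t /\ t 0%nat = p0 /\ t 1%nat = p1 /\ t 2%nat = p2.
Proof.
  intros Hk Hu H01 H02 H12.
  set (v0 := tuple_place u 0 p0). set (v1 := tuple_place v0 1 p1).
  assert (Hv0 : v0 0%nat = p0) by apply tuple_place_at.
  assert (Hv1 : v1 1%nat = p1) by apply tuple_place_at.
  assert (Hv10 : v1 0%nat = p0).
  { unfold v1. rewrite tuple_place_other; [exact Hv0|lia|congruence]. }
  exists (tuple_place v1 2 p2). split; [|split; [|split]].
  - repeat apply distinct_tuple_place; (assumption || lia).
  - rewrite tuple_place_other; [exact Hv10|lia|congruence].
  - rewrite tuple_place_other; [exact Hv1|lia|congruence].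
  - apply tuple_place_at.
Qed.

End Tuples.

Definition three_transitive (X : Type) (act : (R -> R) -> X -> X) : Prop :=
  forall p0 p1 p2 q0 q1 q2 : X,
    p0 <> p1 -> p0 <> p2 -> p1 <> p2 -> q0 <> q1 -> q0 <> q2 -> q1 <> q2 ->
    exists g, thompsonF g /\ act g p0 = q0 /\ act g p1 = q1 /\ act g p2 = q2.

Lemma k_transitive_three_transitive (k : nat) (X : Type) (act : (R -> R) -> X -> X) :
  (3 <= k)%nat -> F_k_transitive X act k -> three_transitive X act.
Proof.
  intros Hk [[u Hu] Htrans] p0 p1 p2 q0 q1 q2 Hp01 Hp02 Hp12 Hq01 Hq02 Hq12.
  destruct (distinct_tuple_prefix3 X k u p0 p1 p2 Hk Hu Hp01 Hp02 Hp12) as (tp & Htp & <- & <- & <-).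
  destruct (distinct_tuple_prefix3 X k u q0 q1 q2 Hk Hu Hq01 Hq02 Hq12) as (tq & Htq & <- & <- & <-).
  destruct (Htrans tp tq Htp Htq) as [g [Hg Hgt]].
  exists g. split; [exact Hg|]. split; [|split]; apply Hgt; lia.
Qed.

Lemma three_transitive_swap (X : Type) (act : (R -> R) -> X -> X) (a b c : X) :
  three_transitive X act -> a <> b -> a <> c -> b <> c ->
  exists x, thompsonF x /\ act x a = b /\ act x b = a /\ act x c = c.
Proof. intros H3 Hab Hac Hbc. apply H3; auto. Qed.

(** * No faithful 3-transitive action *)

Definition left_half_acts_freely (X : Type) (act : (R -> R) -> X -> X) : Prop :=
  forall f p, thompsonF f -> fixes_above (1/2) f -> act f p = p -> forall t, f t = t.

Section ThreeTransitive.

Variables (X : Type) (act : (R -> R) -> X -> X).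
Hypotheses (act_action : F_action X act) (act_faithful : F_faithful X act)
  (act_3trans : three_transitive X act).

Lemma act_moves_point (f : R -> R) (t : R) :
  thompsonF f -> f t <> t -> exists p, act f p <> p.
Proof.
  intros Hf Ht. apply NNPP. intros Hfix. apply Ht.
  rewrite (act_faithful f Hf); [reflexivity|].
  intros p. apply NNPP. intros Hp. apply Hfix. exists p. exact Hp.
Qed.

Section Free.

Hypothesis act_free : left_half_acts_freely X act.

Lemma free_orbit_moves (n : nat) (p : X) : Nat.iter (S n) (act bump_left) p <> p.
Proof.
  intros Hp. rewrite <- act_iter in Hp by auto using thompsonF_bump_left.
  apply (Rlt_not_eq _ _ (bump_left_iter_moves n)). apply (act_free _ p); [| |exact Hp].
  - apply thompsonF_iter, thompsonF_bump_left.
  - apply fixes_above_iter, bump_left_fixes_above.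
Qed.

Lemma free_commutes_bump_left (g : R -> R) (p : X) :
  thompsonF g -> g (1/2) <= 1/2 -> act g p = p -> act g (act bump_left p) = act bump_left p ->
  forall q, act g (act bump_left q) = act bump_left (act g q).
Proof.
  intros Hg Hg12 Hgp HgKp q.
  pose proof thompsonF_bump_left as Hk. pose proof (thompsonF_finv _ Hk) as Hki.
  set (h := fun t => g (bump_left (finv g t))).
  assert (Hh : thompsonF h) by (unfold h; auto using thompsonF_comp, thompsonF_finv).
  assert (Hh_act : forall r, act h r = act g (act bump_left (act (finv g) r)))
    by (intros r; apply act_conj; auto).
  assert (Hh_fix : fixes_above (1/2) h).
  { apply (fixes_above_mono (g (1/2))); [exact Hg12|].
    apply fixes_above_conj; [exact Hg|apply bump_left_fixes_above]. }
  assert (Hh_eq : forall t, h t = bump_left t).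
  { intros t. rewrite <- (finv_r bump_left (h t) Hk). f_equal.
    apply (act_free (fun t => finv bump_left (h t)) p).
    - apply thompsonF_comp; assumption.
    - apply fixes_above_comp; [|exact Hh_fix].
      apply fixes_above_finv; [exact Hk|apply bump_left_fixes_above].
    - rewrite act_comp, Hh_act by assumption.
      rewrite <- Hgp at 1. rewrite act_finv_l, HgKp by assumption.
      apply act_finv_l; assumption. }
  rewrite <- (act_finv_l _ _ act_action g q Hg) at 1.
  rewrite <- Hh_act. apply act_ext, Hh_eq.
Qed.

Lemma free_fixes_orbit (g : R -> R) (p : X) :
  thompsonF g -> g (1/2) <= 1/2 -> act g p = p -> act g (act bump_left p) = act bump_left p ->
  act g (act bump_left (act bump_left p)) = act bump_left (act bump_left p) /\
  act g (act (finv bump_left) p) = act (finv bump_left) p.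
Proof.
  intros Hg Hg12 Hgp HgKp. pose proof thompsonF_bump_left as Hk.
  pose proof (free_commutes_bump_left g p Hg Hg12 Hgp HgKp) as Hcomm. split.
  - rewrite Hcomm, HgKp. reflexivity.
  - apply (act_inj _ _ act_action bump_left _ _ Hk).
    rewrite <- Hcomm, !act_finv_r by assumption. exact Hgp.
Qed.

Lemma left_half_not_free : False.
Proof.
  pose proof thompsonF_bump_left as Hk.
  destruct (act_moves_point bump_left (1/4) Hk) as [p _].
  { apply Rlt_not_eq, (bump_left_iter_moves 0). }
  set (K := act bump_left). set (Ki := act (finv bump_left)).
  assert (HKKi : forall q, K (Ki q) = q) by (intros q; apply act_finv_r; assumption).
  assert (HKinj : forall q r, K q = K r -> q = r) by (intros q r; apply act_inj; assumption).
  assert (H1 : K p <> p) by exact (free_orbit_moves 0 p).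
  assert (H2 : K (K p) <> p) by exact (free_orbit_moves 1 p).
  assert (H3 : K (K (K p)) <> p) by exact (free_orbit_moves 2 p).
  assert (HKi2 : Ki p <> K (K p)).
  { intros E. apply H3. rewrite <- E. apply HKKi. }
  destruct (act_3trans p (K p) (K (K p)) p (K p) (Ki p)) as (x & Hx & Hx0 & Hx1 & Hx2).
  1, 4: exact (not_eq_sym H1).
  1: exact (not_eq_sym H2).
  1: intros E; apply H1, HKinj; congruence.
  1: intros E; apply H1; rewrite E at 1; apply HKKi.
  1: intros E; apply H2; rewrite E; apply HKKi.
  destruct (thompsonF_le_or_finv_le x (1/2) Hx) as [Hle|Hle].
  - apply HKi2. rewrite <- Hx2. apply (free_fixes_orbit x p Hx Hle Hx0 Hx1).
  - assert (Hxi0 : act (finv x) p = p) by (rewrite <- Hx0 at 1; apply act_finv_l; assumption).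
    assert (Hxi1 : act (finv x) (K p) = K p) by (rewrite <- Hx1 at 1; apply act_finv_l; assumption).
    destruct (free_fixes_orbit (finv x) p) as [_ Hfix]; auto using thompsonF_finv.
    fold Ki in Hfix. rewrite <- Hx2, act_finv_l, Hx2 in Hfix by assumption.
    exact (HKi2 (eq_sym Hfix)).
Qed.

End Free.

Section NonFree.

Variables (w : R -> R) (r0 : X).
Hypotheses (Hw : thompsonF w) (Hw_fix : fixes_above (1/2) w) (Hw_r0 : act w r0 = r0).

Lemma conj_commutes_bump_right (g : R -> R) (q : X) :
  thompsonF g -> g (1/2) <= 1/2 ->
  act g (act w (act (finv g) (act bump_right q))) =
  act bump_right (act g (act w (act (finv g) q))).
Proof.
  intros Hg Hg12. pose proof thompsonF_bump_right as Hc.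
  rewrite <- !act_conj by assumption.
  assert (Hy : thompsonF (fun t => g (w (finv g t)))) by auto using thompsonF_comp, thompsonF_finv.
  apply (act_commute _ _ act_action); [exact Hy|exact Hc|].
  apply (disjoint_supports_commute (1/2) (fun t => g (w (finv g t))) bump_right Hy Hc).
  - apply (fixes_above_mono (g (1/2))); [exact Hg12|apply fixes_above_conj; assumption].
  - apply bump_right_fixes_below.
Qed.

Lemma conj_moves_half (g : R -> R) (p q m : X) :
  thompsonF g -> act w p = p -> act w q <> q ->
  act g p = act bump_right m -> act g q = m -> 1/2 < g (1/2).
Proof.
  intros Hg Hwp Hwq Hgp Hgq. apply Rnot_le_lt. intros Hg12.
  assert (Hs : act g (act w (act (finv g) (act bump_right m))) = act bump_right m).
  { rewrite <- Hgp, act_finv_l, Hwp by assumption. reflexivity. }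
  rewrite conj_commutes_bump_right in Hs by assumption.
  apply (act_inj _ _ act_action _ _ _ thompsonF_bump_right) in Hs.
  rewrite <- Hgq, act_finv_l in Hs by assumption.
  exact (Hwq (act_inj _ _ act_action g _ _ Hg Hs)).
Qed.

Lemma swap_absurd (p q m : X) (x : R -> R) :
  act w p = p -> act w q <> q -> thompsonF x ->
  act x p = act bump_right m -> act x (act bump_right m) = p ->
  act x q = m -> act x m = q -> False.
Proof.
  intros Hwp Hwq Hx Hxp Hxs Hxq Hxm.
  destruct (thompsonF_le_or_finv_le x (1/2) Hx) as [Hle|Hle].
  - exact (Rlt_not_le _ _ (conj_moves_half x p q m Hx Hwp Hwq Hxp Hxq) Hle).
  - refine (Rlt_not_le _ _ (conj_moves_half (finv x) p q m _ Hwp Hwq _ _) Hle).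
    + apply thompsonF_finv, Hx.
    + rewrite <- Hxs. apply act_finv_l; assumption.
    + rewrite <- Hxm. apply act_finv_l; assumption.
Qed.

Lemma nonfree_absurd (t0 : R) : w t0 <> t0 -> False.
Proof.
  intros Ht0. pose proof thompsonF_bump_right as Hc.
  destruct (act_moves_point bump_right (3/4) Hc bump_right_moves) as [m Hm].
  destruct (act_moves_point w t0 Hw Ht0) as [m' Hm'].
  assert (Hwc : forall q, act w (act bump_right q) = act bump_right (act w q)).
  { intros q. apply act_commute; auto.
    apply (disjoint_supports_commute (1/2)); auto using bump_right_fixes_below. }
  set (s := act bump_right m) in *.
  destruct (classic (act w m = m)) as [Hwm|Hwm].
  - assert (Hws : act w s = s) by (unfold s; rewrite Hwc, Hwm; reflexivity).
    destruct (three_transitive_swap X act m' m s act_3trans) as (x & Hx & Hx1 & Hx2 & Hx3).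
    + intros E. subst m'. contradiction.
    + intros E. apply Hm'. rewrite E. exact Hws.
    + exact (not_eq_sym Hm).
    + exact (swap_absurd s m' m x Hws Hm' Hx Hx3 Hx3 Hx1 Hx2).
  - assert (Hws : act w s <> s).
    { intros E. apply Hwm, (act_inj _ _ act_action bump_right _ _ Hc).
      rewrite <- Hwc. exact E. }
    destruct (three_transitive_swap X act r0 s m act_3trans) as (x & Hx & Hx1 & Hx2 & Hx3).
    + intros E. apply Hws. rewrite <- E. exact Hw_r0.
    + intros E. apply Hwm. rewrite <- E. exact Hw_r0.
    + exact Hm.
    + exact (swap_absurd r0 m m x Hw_r0 Hwm Hx Hx1 Hx2 Hx3 Hx3).
Qed.

End NonFree.

Lemma left_half_free : left_half_acts_freely X act.
Proof.
  intros f p Hf Hfa Hfp t. apply NNPP. intros Ht. exact (nonfree_absurd f p Hf Hfa Hfp t Ht).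
Qed.

End ThreeTransitive.

Theorem corollary5p3 :
  forall (k : nat) (X : Type) (act : (R -> R) -> X -> X),
    F_action X act -> F_faithful X act -> F_k_transitive X act k ->
    (k <= 2)%nat.
Proof.
  intros k X act Hact Hfaithful Htrans.
  destruct (le_lt_dec k 2) as [Hk|Hk]; [exact Hk|exfalso].
  pose proof (k_transitive_three_transitive k X act Hk Htrans) as H3.
  exact (left_half_not_free X act Hact Hfaithful H3 (left_half_free X act Hact Hfaithful H3)).
Qed.
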